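(* Let $\ket\psi$ be a pure $n$-qubit state and $t\ge1$. With $p_t$ the output distribution of the $t$-copy hidden cut circuit on $\ket\psi$, we have $p_t = p_1^{\ast t} = p_1\ast\cdots\ast p_1$ ($t$ factors), where $(f\ast g)(\bm x)=\sum_{\bm x'\in\{0,1\}^n} f(\bm x')\,g(\bm x\oplus\bm x')$. Equivalently $p_t=\mathcal F^{-1}\bigl[\mathcal F[p_1]^t\bigr]$ with $\mathcal F[f](\bm s)=\sum_{\bm x}(-1)^{\bm x\cdot\bm s}f(\bm x)$ and $\mathcal F^{-1}[\hat f](\bm x)=2^{-n}\sum_{\bm s}(-1)^{\bm x\cdot\bm s}\hat f(\bm s)$.
   Context: $\oplus$ is bitwise addition mod 2, and $\bm x\cdot\bm s$ is the dot product mod 2. $\mathrm{SWAP}_{\bm s}$ acts on two copies of the $n$-qubit space by swapping the qubits of subsystem $\bm s$ (bitstring $\bm s\in\{0,1\}^n$, qubit $j$ included iff $s_j=1$) between the copies. The $t$-copy hidden cut circuit: an $n$-qubit group register is initialized to $\ket{0^n}$ and a state register to $(\ket\psi\ket\psi)^{\otimes t}$; apply $H^{\otimes n}$ to the group register; apply $\sum_{\bm s}\ket{\bm s}\bra{\bm s}\otimes \mathrm{SWAP}_{\bm s}^{\otimes t}$; apply $H^{\otimes n}$ to the group register; measure the group register in the computational basis; $p_t$ denotes the resulting distribution. *)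

(* Amplitudes live in an arbitrary numClosedFieldType C
   (e.g. algC, or complex R for R : rcfType), which contains the complex numbers case. *)
From mathcomp Require Import all_boot all_order all_algebra.
Set Implicit Arguments. Unset Strict Implicit. Unset Printing Implicit Defensive.
Import Order.TTheory GRing.Theory Num.Theory.
Local Open Scope ring_scope.

(* n-bit strings; bit i is qubit i *)
Definition bits (n : nat) := {ffun 'I_n -> bool}.
Definition zerob (n : nat) : bits n := [ffun _ => false].
Definition xorv (n : nat) (x y : bits n) : bits n := [ffun i => x i (+) y i].
Definition dotb (n : nat) (x s : bits n) : bool :=
  \big[addb/false]_(i < n) (x i && s i).

(* computational basis of the state register (|psi>|psi>)^{(x) t}:
   t pairs (first copy, second copy) of n-bit strings *)
Definition sreg (n t : nat) := {ffun 'I_t -> bits n * bits n}.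

(* SWAP_s on a basis state |a>|b> of two copies: swap qubit j iff s_j = 1 *)
Definition swapS (n : nat) (s : bits n) (ab : bits n * bits n) : bits n * bits n :=
  ([ffun j => if s j then ab.2 j else ab.1 j],
   [ffun j => if s j then ab.1 j else ab.2 j]).
Definition swapT (n t : nat) (s : bits n) (k : sreg n t) : sreg n t :=
  [ffun j => swapS s (k j)].

Section Circuit.
Variable C : numClosedFieldType.
Variables n t : nat.

(* joint vector on group register (x) state register *)
Definition cvec := bits n * sreg n t -> C.

(* amplitude of (|psi>|psi>)^{(x) t} *)
Definition prodstate (psi : bits n -> C) (k : sreg n t) : C :=
  \prod_(j < t) (psi (k j).1 * psi (k j).2).

Definition init_state (psi : bits n -> C) : cvec :=
  fun gk => (gk.1 == zerob n)%:R * prodstate psi gk.2.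

Definition hadamardN (g g' : bits n) : C :=
  \prod_(i < n) ((sqrtC 2)^-1 * (-1) ^+ (g i && g' i)).

Definition applyH (v : cvec) : cvec :=
  fun gk => \sum_(g' : bits n) hadamardN gk.1 g' * v (g', gk.2).

(* sum_s |s><s| (x) SWAP_s^{(x) t}  (SWAP acts as a basis permutation) *)
Definition applyCSWAP (v : cvec) : cvec :=
  fun gk => \sum_(k : sreg n t) (swapT gk.1 k == gk.2)%:R * v (gk.1, k).

(* output distribution p_t of the t-copy hidden cut circuit (Born rule) *)
Definition hidden_cut_dist (psi : bits n -> C) : bits n -> C :=
  fun x => \sum_(k : sreg n t)
             `| applyH (applyCSWAP (applyH (init_state psi))) (x, k) | ^+ 2.
End Circuit.

Section Fourier.
Variable C : numClosedFieldType.
Variable n : nat.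

Definition bconv (f g : bits n -> C) : bits n -> C :=
  fun x => \sum_(x' : bits n) f x' * g (xorv x x').

(* f^{*t} = f * ... * f  (t factors, t >= 1) *)
Definition convpow (f : bits n -> C) (t : nat) : bits n -> C :=
  iter t.-1 (bconv f) f.

Definition fourier (f : bits n -> C) : bits n -> C :=
  fun s => \sum_(x : bits n) (-1) ^+ (dotb x s) * f x.

Definition ifourier (fh : bits n -> C) : bits n -> C :=
  fun x => (2%:R ^+ n)^-1 * \sum_(s : bits n) (-1) ^+ (dotb x s) * fh s.
End Fourier.

From mathcomp Require Import all_boot all_order all_algebra.
From mathcomp Require Import ring.
From Stdlib Require Import FunctionalExtensionality.
Set Implicit Arguments.
Unset Strict Implicit.
Unset Printing Implicit Defensive.
Import GRing.Theory Num.Theory.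
Local Open Scope ring_scope.

(* Up to the factor [2^-n] from the two Hadamard layers, the output amplitude at
   [(x, k)] is [sum_s chi(x, s) psi^(2t)(SWAP_s k)], where chi is the character
   [(-1)^(x.s)] of the group [(Z/2)^n].  Expanding the squared modulus and summing
   over the state register [k], each cross term [(s, s')] contributes
   [G(s + s')^t], where [G(u) = <psi psi| SWAP_u |psi psi>] is the single-copy
   overlap, because the state register is a product of [t] identical pairs.
   Orthogonality of characters then gives [p_t = F^-1 [G^t]].  Hence
   [F [p_1] = G], and the convolution theorem [F^-1 a * F^-1 b = F^-1 (a b)]
   turns [G^t] into the [t]-fold convolution power of [p_1]. *)

Lemma sum_delta (R : pzSemiRingType) (T : finType) (a : T) (F : T -> R) :
  \sum_(x : T) (x == a)%:R * F x = F a.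
Proof.
rewrite (bigD1 a) //= eqxx mul1r big1 ?addr0 // => x /negbTE->.
by rewrite mul0r.
Qed.

(* [rmorphM] and [rmorph_sum] would expose the canonical morphism instead of
   [_^*], and [conj_hscale] and [conj_bchar] would then no longer match. *)
Lemma conjCM (C : numClosedFieldType) (a b : C) : (a * b)^* = a^* * b^*.
Proof. exact: rmorphM. Qed.

Lemma conjC_sum (C : numClosedFieldType) (I : finType) (F : I -> C) :
  (\sum_i F i)^* = \sum_i (F i)^*.
Proof. exact: rmorph_sum. Qed.

Lemma xorvK n (s : bits n) : involutive (xorv s).
Proof. by move=> u; apply/ffunP => j; rewrite !ffunE addKb. Qed.

Section Characters.
Variable C : numClosedFieldType.
Variable n : nat.

Definition bchar (x s : bits n) : C := \prod_(i < n) (-1) ^+ (x i && s i).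

Lemma sign_dotb (x s : bits n) : (-1) ^+ dotb x s = bchar x s.
Proof.
apply: (big_morph (fun b : bool => (-1) ^+ b : C)); last by rewrite expr0.
exact: signr_addb.
Qed.

Lemma bcharC x s : bchar x s = bchar s x.
Proof. by apply: eq_bigr => i _; rewrite andbC. Qed.

Lemma bchar_xorr x s u : bchar x (xorv s u) = bchar x s * bchar x u.
Proof.
rewrite /bchar -big_split /=; apply: eq_bigr => i _.
by rewrite ffunE -signr_addb; case: (x i); case: (s i); case: (u i).
Qed.

Lemma bchar_xorl x y s : bchar (xorv x y) s = bchar x s * bchar y s.
Proof. by rewrite bcharC bchar_xorr !(bcharC s). Qed.

Lemma bchar0 x : bchar x (zerob n) = 1.
Proof. by rewrite /bchar big1 // => i _; rewrite ffunE andbF. Qed.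

Lemma bchar_mulss x s : bchar x s * bchar x s = 1.
Proof.
by rewrite /bchar -big_split /= big1 // => i _; rewrite -signr_addb addbb.
Qed.

Lemma conj_bchar x s : (bchar x s)^* = bchar x s.
Proof. by rewrite rmorph_prod; apply: eq_bigr => i _; rewrite rmorph_sign. Qed.

Lemma sum_bool_sign_mul (b c : bool) :
  \sum_(a : bool) (-1) ^+ (a && b) * (-1) ^+ (a && c) = (b == c)%:R *+ 2 :> C.
Proof.
rewrite big_bool; case: b; case: c => /=;
  by rewrite ?expr0 ?expr1 ?mulrNN ?mulr1 ?mul1r ?addNr ?subrr ?mul0rn ?mulr2n.
Qed.

Lemma bchar_orthogonal (s u : bits n) :
  \sum_(x : bits n) bchar x s * bchar x u = 2%:R ^+ n * (s == u)%:R.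
Proof.
have -> : \sum_(x : bits n) bchar x s * bchar x u =
    \prod_(i < n) \sum_(b : bool) (-1) ^+ (b && s i) * (-1) ^+ (b && u i).
  by rewrite bigA_distr_bigA /=; apply: eq_bigr => x _; rewrite -big_split.
under eq_bigr do rewrite sum_bool_sign_mul.
have [<-|neq_su] := eqVneq s u.
  rewrite mulr1 -[n in _ ^+ n]card_ord -prodr_const.
  by apply: eq_bigr => i _; rewrite eqxx.
have [i neq_i] : exists i, s i != u i.
  apply/existsP; apply: contraR neq_su => /existsPn eq_su; apply/eqP/ffunP => i.
  by apply/eqP; rewrite -[_ == _]negbK eq_su.
by rewrite mulr0 (bigD1 i) //= (negbTE neq_i) mul0rn mul0r.
Qed.

Lemma two_expn_neq0 : 2%:R ^+ n != 0 :> C.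
Proof. by rewrite expf_neq0 // pnatr_eq0. Qed.

Lemma ifourierE (g : bits n -> C) x :
  ifourier g x = (2%:R ^+ n)^-1 * \sum_s bchar x s * g s.
Proof. by congr (_ * _); apply: eq_bigr => s _; rewrite sign_dotb. Qed.

Lemma ifourierK : cancel (@ifourier C n) (@fourier C n).
Proof.
move=> g; apply: functional_extensionality => s; rewrite /fourier.
under eq_bigr do rewrite ifourierE sign_dotb mulrCA big_distrr /=.
rewrite -big_distrr /= exchange_big /=.
have collapse u : \sum_(x : bits n) bchar x s * (bchar x u * g u) =
    2%:R ^+ n * ((u == s)%:R * g u).
  rewrite mulrA eq_sym -bchar_orthogonal big_distrl.
  by apply: eq_bigr => x _; rewrite mulrA.
under eq_bigr do rewrite collapse.
by rewrite -big_distrr /= sum_delta mulrA mulVf ?two_expn_neq0 ?mul1r.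
Qed.

Lemma bconv_ifourier (a b : bits n -> C) :
  bconv (ifourier a) (ifourier b) = ifourier (fun s => a s * b s).
Proof.
apply: functional_extensionality => x; rewrite /bconv ifourierE.
set c := (2%:R ^+ n : C)^-1.
have expand x' : ifourier a x' * ifourier b (xorv x x') =
    c * c * \sum_s \sum_u (a s * b u * bchar x u) * (bchar x' s * bchar x' u).
  rewrite !ifourierE -/c mulrACA big_distrlr /=; congr (_ * _).
  by apply: eq_bigr => s _; apply: eq_bigr => u _; rewrite bchar_xorl; ring.
under eq_bigr do rewrite expand.
rewrite -mulr_sumr exchange_big /=.
under eq_bigr do rewrite exchange_big /=.
under eq_bigr => s _ do under eq_bigr => u _ do
  rewrite -mulr_sumr bchar_orthogonal mulrC -!mulrA eq_sym.
under eq_bigr => s _ do rewrite -mulr_sumr sum_delta.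
rewrite -mulr_sumr -mulrA mulKf ?two_expn_neq0 //; congr (_ * _).
by apply: eq_bigr => s _; rewrite mulrA mulrC.
Qed.

Lemma convpow_ifourier (g : bits n -> C) m :
  convpow (ifourier g) m.+1 = ifourier (fun s => g s ^+ m.+1).
Proof.
elim: m => [//|m IHm].
rewrite /convpow /= -/(convpow _ m.+1) IHm bconv_ifourier.
by congr ifourier; apply: functional_extensionality => s; rewrite exprS.
Qed.

End Characters.

Arguments bchar {C n}.

Lemma swapSK n (s : bits n) : involutive (swapS s).
Proof.
by move=> [a b]; congr (_, _); apply/ffunP => j; rewrite !ffunE; case: (s j).
Qed.

Lemma swapS_xorv n (s s' : bits n) ab :
  swapS s' (swapS s ab) = swapS (xorv s s') ab.
Proof.
by congr (_, _); apply/ffunP => j; rewrite !ffunE; case: (s j); case: (s' j).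
Qed.

Lemma swapTK n t (s : bits n) : involutive (@swapT n t s).
Proof. by move=> k; apply/ffunP => j; rewrite !ffunE swapSK. Qed.

Lemma swapT_xorv n t (s s' : bits n) (k : sreg n t) :
  swapT s' (swapT s k) = swapT (xorv s s') k.
Proof. by apply/ffunP => j; rewrite !ffunE swapS_xorv. Qed.

Section Circuit.
Variable C : numClosedFieldType.
Variables n t : nat.
Variable psi : bits n -> C.

Definition hscale : C := (sqrtC 2)^-1 ^+ n.

Definition pair_amp (ab : bits n * bits n) : C := psi ab.1 * psi ab.2.

Definition swap_overlap (u : bits n) : C :=
  \sum_(ab : bits n * bits n) pair_amp ab * (pair_amp (swapS u ab))^*.

Lemma hadamardNE (g g' : bits n) : hadamardN C g g' = hscale * bchar g g'.
Proof. by rewrite /hadamardN big_split /= prodr_const card_ord. Qed.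

Lemma hscale_sqr : hscale * hscale = (2%:R ^+ n)^-1.
Proof. by rewrite -exprMn -invfM -expr2 sqrtCK exprVn. Qed.

Lemma conj_hscale : hscale^* = hscale.
Proof. by apply: geC0_conj; rewrite exprn_ge0 // invr_ge0 sqrtC_ge0 ler0n. Qed.

Lemma circuit_amplitude x (k : sreg n t) :
  applyH (applyCSWAP (applyH (init_state psi))) (x, k) =
  hscale * hscale * \sum_(s : bits n) bchar x s * prodstate psi (swapT s k).
Proof.
rewrite /applyH /= mulr_sumr; apply: eq_bigr => s _; rewrite /applyCSWAP /=.
have swapT_eq k' : (swapT s k' == k) = (k' == swapT s k).
  by apply/eqP/eqP => [<-|->]; rewrite swapTK.
under eq_bigr do rewrite swapT_eq.
rewrite sum_delta /init_state /=.
under eq_bigr do rewrite mulrCA.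
by rewrite sum_delta !hadamardNE bchar0 mulr1; ring.
Qed.

Lemma sum_prodstate_swapT (u : bits n) :
  \sum_(k : sreg n t) prodstate psi k * (prodstate psi (swapT u k))^* =
  swap_overlap u ^+ t.
Proof.
rewrite -[in RHS](card_ord t) -prodr_const.
rewrite (bigA_distr_bigA (fun _ ab => pair_amp ab * (pair_amp (swapS u ab))^*)).
apply: eq_bigr => k _; rewrite /prodstate rmorph_prod -big_split /=.
by apply: eq_bigr => j _; rewrite ffunE.
Qed.

Lemma hidden_cut_dist_ifourier :
  hidden_cut_dist t psi = ifourier (fun u => swap_overlap u ^+ t).
Proof.
apply: functional_extensionality => x; rewrite /hidden_cut_dist ifourierE.
under eq_bigr => k _ do rewrite circuit_amplitude normCK !conjCM conj_hscale
  conjC_sum mulrACA big_distrlr /=.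
rewrite -mulr_sumr exchange_big /=.
under eq_bigr => s _ do rewrite exchange_big /=.
have cross_term s s' :
    \sum_(k : sreg n t) bchar x s * prodstate psi (swapT s k) *
      (bchar x s' * prodstate psi (swapT s' k))^* =
    bchar x s * bchar x s' * swap_overlap (xorv s s') ^+ t.
  rewrite -sum_prodstate_swapT mulr_sumr (reindex_inj (can_inj (swapTK s))) /=.
  by apply: eq_bigr => k _; rewrite conjCM conj_bchar swapTK swapT_xorv; ring.
under eq_bigr => s _ do under eq_bigr => s' _ do rewrite cross_term.
under eq_bigr => s _ do rewrite (reindex_inj (can_inj (xorvK s))) /=.
under eq_bigr => s _ do under eq_bigr => u _ do
  rewrite xorvK bchar_xorr mulrA bchar_mulss mul1r.
rewrite sumr_const card_ffun card_bool card_ord -[in LHS]mulr_natr natrX.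
rewrite hscale_sqr.
by field; exact: two_expn_neq0.
Qed.

End Circuit.

Theorem mainTheorem3 (C : numClosedFieldType) (n t : nat) (psi : bits n -> C)
  (Hpsi : \sum_(a : bits n) `|psi a| ^+ 2 = 1) (Ht : (1 <= t)%N) :
  hidden_cut_dist t psi = convpow (hidden_cut_dist 1 psi) t /\
  hidden_cut_dist t psi = ifourier (fun s => fourier (hidden_cut_dist 1 psi) s ^+ t).
Proof.
have p1E : hidden_cut_dist 1 psi = ifourier (swap_overlap psi).
  by rewrite hidden_cut_dist_ifourier.
rewrite hidden_cut_dist_ifourier p1E ifourierK; split => //.
by case: t Ht => // m _; rewrite convpow_ifourier.
Qed.
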